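(* A magma $(Q,\cdot)$ is a Ward quasigroup if and only if it is cancellative and satisfies $(xz)(yz)=xy$ for all $x,y,z\in Q$.
   Context: A Ward quasigroup is a quasigroup (a magma in which $ax=b$ and $ya=b$ have unique solutions for all $a,b$) satisfying $(xz)(yz)=xy$ for all $x,y,z$. A magma is cancellative if $ax=ay\Rightarrow x=y$ and $xa=ya\Rightarrow x=y$. *)

Definition is_quasigroup {Q : Type} (op : Q -> Q -> Q) : Prop :=
  forall a b : Q,
    (exists x, op a x = b /\ forall x', op a x' = b -> x' = x) /\
    (exists y, op y a = b /\ forall y', op y' a = b -> y' = y).

Definition ward_identity {Q : Type} (op : Q -> Q -> Q) : Prop :=
  forall x y z : Q, op (op x z) (op y z) = op x y.

Definition is_ward_quasigroup {Q : Type} (op : Q -> Q -> Q) : Prop :=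
  is_quasigroup op /\ ward_identity op.

Definition is_cancellative {Q : Type} (op : Q -> Q -> Q) : Prop :=
  (forall a x y : Q, op a x = op a y -> x = y) /\
  (forall a x y : Q, op x a = op y a -> x = y).

(* In a cancellative magma with (xz)(yz) = xy, cancelling x from x(xx) = x = x(zz)
   shows that all squares coincide; their common value e is a right identity and
   satisfies e(xy) = yx, so left multiplication by e is an involution.  Writing
   a = e(ea) then exhibits the solutions a\b = (eb)(ea) and b/a = b(ea). *)

From Stdlib Require Import Setoid.

Definition is_divisible {Q : Type} (op : Q -> Q -> Q) : Prop :=
  forall a b : Q, (exists x, op a x = b) /\ (exists y, op y a = b).

Lemma quasigroup_cancellative {Q : Type} (op : Q -> Q -> Q) :
  is_quasigroup op -> is_cancellative op.
Proof.
  intros Hq. split.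
  - intros a x y Hxy. destruct (Hq a (op a x)) as [[s [_ Hs]] _].
    rewrite (Hs x eq_refl), (Hs y (eq_sym Hxy)). reflexivity.
  - intros a x y Hxy. destruct (Hq a (op x a)) as [_ [s [_ Hs]]].
    rewrite (Hs x eq_refl), (Hs y (eq_sym Hxy)). reflexivity.
Qed.

Lemma cancellative_divisible_quasigroup {Q : Type} (op : Q -> Q -> Q) :
  is_cancellative op -> is_divisible op -> is_quasigroup op.
Proof.
  intros [Hl Hr] Hd a b. destruct (Hd a b) as [[x Hx] [y Hy]]. split.
  - exists x. split; [exact Hx |].
    intros x' Hx'. apply (Hl a). now rewrite Hx, Hx'.
  - exists y. split; [exact Hy |].
    intros y' Hy'. apply (Hr a). now rewrite Hy, Hy'.
Qed.

Section CancellativeWard.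

Variables (Q : Type) (op : Q -> Q -> Q).
Hypothesis ward : ward_identity op.
Hypothesis cancel_l : forall a x y : Q, op a x = op a y -> x = y.

Lemma ward_sq_idem (u : Q) : op (op u u) (op u u) = op u u.
Proof. apply ward. Qed.

Lemma ward_mul_sq_r (u c : Q) : op c (op u u) = c.
Proof.
  apply (cancel_l (op u u)).
  rewrite <- (ward (op u u) c (op u u)), ward_sq_idem. reflexivity.
Qed.

Lemma ward_sq_eq (u v : Q) : op u u = op v v.
Proof. apply (cancel_l u). now rewrite !ward_mul_sq_r. Qed.

Lemma ward_sq_mul_l (u x y : Q) : op (op u u) (op x y) = op y x.
Proof. rewrite (ward_sq_eq u y). apply ward. Qed.

Lemma ward_sq_mulK (u x : Q) : op (op u u) (op (op u u) x) = x.
Proof. rewrite ward_sq_mul_l. apply ward_mul_sq_r. Qed.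

Lemma ward_solve_l (a b : Q) : op a (op (op (op a a) b) (op (op a a) a)) = b.
Proof.
  rewrite <- (ward_sq_mulK a a) at 1. rewrite ward. apply ward_sq_mulK.
Qed.

Lemma ward_solve_r (a b : Q) : op (op b (op (op a a) a)) a = b.
Proof.
  rewrite <- (ward_sq_mulK a a) at 4. rewrite ward. apply ward_mul_sq_r.
Qed.

Lemma ward_divisible : is_divisible op.
Proof.
  intros a b. split.
  - eexists. apply ward_solve_l.
  - eexists. apply ward_solve_r.
Qed.

End CancellativeWard.

Theorem lemma6p4 (Q : Type) (op : Q -> Q -> Q) :
  is_ward_quasigroup op <-> (is_cancellative op /\ ward_identity op).
Proof.
  split.
  - intros [Hq Hw]. split; [apply quasigroup_cancellative |]; assumption.
  - intros [Hc Hw]. split; [| exact Hw].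
    apply cancellative_divisible_quasigroup; [exact Hc |].
    apply ward_divisible; [exact Hw | apply Hc].
Qed.
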